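(* Let $q$ be a self-join-free Boolean conjunctive query and let $C$ be an elementary cycle in the M-graph of $q$ (identified with its set of atoms). Let $\mathbf{db}$ be a database and let $\mathcal{S}$ be a strong component of the $\hookrightarrow_C$-graph of $\mathbf{db}$. If some fact of $\mathcal{S}$ belongs to the maximal garbage set for $C$ in $\mathbf{db}$, then every fact of $\mathcal{S}$ belongs to the maximal garbage set for $C$ in $\mathbf{db}$.
   Context: Every relation name has a signature $[n,k]$ ($1\le k\le n$; primary-key positions $1,\dots,k$) and a mode in $\{\mathsf{c},\mathsf{i}\}$. For an atom $F$, $\mathrm{key}(F)$ = variables at primary-key positions, $\mathrm{vars}(F)$ = all its variables. Facts are variable-free atoms; key-equal facts share relation name and primary-key values. A database is a finite set of facts with no two distinct key-equal facts of mode $\mathsf{c}$, all of whose relation names occur in $q$; the block of $A$ is the set of facts of $\mathbf{db}$ key-equal to $A$; a repair is a maximal subset without two distinct key-equal facts. A self-join-free Boolean conjunctive query is a finite set of atoms with distinct relation names; $\mathrm{atom}(A)$ is the atom of $q$ with the relation name of fact $A$. $\mathcal{K}(p)=\{\mathrm{key}(F)\to\mathrm{vars}(F)\mid F\in p\}$; $q^{\mathsf{c}}$ = atoms of mode $\mathsf{c}$. M-graph of $q$: vertices atoms of $q$, edge $F\to G$ ($F\ne G$) iff $\mathcal{K}(q^{\mathsf{c}})\models\mathrm{vars}(F)\to\mathrm{key}(G)$. $\hookrightarrow$-graph: vertices facts of $\mathbf{db}$, edge $A\hookrightarrow B$ iff there are a valuation $\theta$ of the variables of $q$ and an M-graph edge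 $F\to G$ with $\theta(q)\subseteq\mathbf{db}$, $A=\theta(F)$, $B$ key-equal to $\theta(G)$. The $\hookrightarrow_C$-graph: vertices the facts $A$ with $\mathrm{atom}(A)$ in $C$, edge $A\hookrightarrow_C B$ iff $A\hookrightarrow B$ and $C$ has an edge from $\mathrm{atom}(A)$ to $\mathrm{atom}(B)$. A subset $\mathbf{o}\subseteq\mathbf{db}$ is a garbage set for $q_0\subseteq q$ in $\mathbf{db}$ if (1) for every $A\in\mathbf{o}$, $\mathrm{atom}(A)\in q_0$ and the block of $A$ is included in $\mathbf{o}$; and (2) there is a repair $\mathbf{r}$ of $\mathbf{o}$ such that for every valuation $\theta$ of the variables of $q$, if $\theta(q)\subseteq(\mathbf{db}\setminus\mathbf{o})\cup\mathbf{r}$ then $\theta(q_0)\cap\mathbf{r}=\emptyset$. Garbage sets are closed under union; the maximal garbage set is the largest one. *)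

From Stdlib Require Import Relation_Operators.
From mathcomp Require Import all_boot.
From Stdlib Require List.
Set Implicit Arguments. Unset Strict Implicit. Unset Printing Implicit Defensive.

(* A schema: every relation name R has signature [arity R, keylen R]
   (primary-key positions 1..keylen R) and a mode (cmode R = true means c). *)
Record schema (Rel : eqType) := Schema {
  arity : Rel -> nat;
  keylen : Rel -> nat;
  cmode : Rel -> bool }.

Section CQA.
Variables (Rel V D : eqType).
(* V: variables, D: constants *)

Definition term := (V + D)%type.
Definition atom := (Rel * seq term)%type.
Definition fact := (Rel * seq D)%type.

Variable sch : schema Rel.

Definition wf_schema := forall R, 0 < keylen sch R <= arity sch R.

Definition vars_of (ts : seq term) : seq V :=
  pmap (fun t => if t is inl x then Some x else None) ts.

Definition key (F : atom) : seq V := vars_of (take (keylen sch F.1) F.2).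
Definition vars (F : atom) : seq V := vars_of F.2.

Definition key_equal (A B : fact) : bool :=
  (A.1 == B.1) && (take (keylen sch A.1) A.2 == take (keylen sch B.1) B.2).

Definition sjf_query (q : seq atom) : Prop :=
  uniq (map fst q) /\ forall F, F \in q -> size F.2 = arity sch F.1.

Definition qc (p : seq atom) : seq atom := filter (fun F => cmode sch F.1) p.

Definition fd := (seq V * seq V)%type.
Definition Kset (p : seq atom) : seq fd := map (fun F => (key F, vars F)) p.

Definition agree (t1 t2 : V -> nat) (X : seq V) := forall x, x \in X -> t1 x = t2 x.
Definition fd_sat (r : seq (V -> nat)) (f : fd) :=
  forall t1 t2, List.In t1 r -> List.In t2 r -> agree t1 t2 f.1 -> agree t1 t2 f.2.
(* Sigma |= X -> Y : every relation (over an infinite domain) satisfying Sigma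
   satisfies X -> Y *)
Definition fd_implies (Sigma : seq fd) (X Y : seq V) :=
  forall r : seq (V -> nat), (forall f, f \in Sigma -> fd_sat r f) -> fd_sat r (X, Y).

Definition medge (q : seq atom) (F G : atom) : Prop :=
  [/\ F \in q, G \in q, F != G & fd_implies (Kset (qc q)) (vars F) (key G)].

Definition inst (theta : V -> D) (F : atom) : fact :=
  (F.1, map (fun t => match t with inl x => theta x | inr c => c end) F.2).
Definition sat_in (theta : V -> D) (q : seq atom) (P : fact -> Prop) :=
  forall F, F \in q -> P (inst theta F).

Definition is_db (q : seq atom) (db : seq fact) : Prop :=
  (forall A, A \in db -> size A.2 = arity sch A.1 /\ A.1 \in map fst q) /\
  (forall A B, A \in db -> B \in db -> cmode sch A.1 -> key_equal A B -> A = B).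

Definition atom_is (q : seq atom) (A : fact) (F : atom) := F \in q /\ F.1 = A.1.

Definition hook (q : seq atom) (db : seq fact) (A B : fact) : Prop :=
  A \in db /\ B \in db /\
  exists theta F G, sat_in theta q (fun X => X \in db) /\ medge q F G /\
    A = inst theta F /\ key_equal B (inst theta G).

(* elementary cycle of the M-graph, given as a duplicate-free cyclic list *)
Definition elem_cycle (q : seq atom) (C : seq atom) : Prop :=
  [/\ C != [::], uniq C & forall F, F \in C -> medge q F (next C F)].

Definition cyc_edge (C : seq atom) (F G : atom) := F \in C /\ next C F = G.

Definition cvertex (q C : seq atom) (db : seq fact) (A : fact) :=
  A \in db /\ exists F, atom_is q A F /\ F \in C.

Definition cedge (q C : seq atom) (db : seq fact) (A B : fact) : Prop :=
  cvertex q C db A /\ cvertex q C db B /\ hook q db A B /\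
  exists F G, atom_is q A F /\ atom_is q B G /\ cyc_edge C F G.

Definition creach q C db := clos_refl_trans fact (cedge q C db).

Definition strong_component (q C : seq atom) (db : seq fact) (S : fact -> Prop) :=
  [/\ exists A, S A,
      forall A, S A -> cvertex q C db A,
      forall A B, S A -> S B -> creach q C db A B &
      forall A B, S A -> cvertex q C db B -> creach q C db A B ->
                  creach q C db B A -> S B].

Definition subset (P Q : fact -> Prop) := forall x, P x -> Q x.
Definition consistent (r : fact -> Prop) :=
  forall A B, r A -> r B -> key_equal A B -> A = B.
Definition repair (o r : fact -> Prop) :=
  [/\ subset r o, consistent r &
      forall r', subset r r' -> subset r' o -> consistent r' -> subset r' r].

Definition garbage (q : seq atom) (db : seq fact) (q0 : seq atom) (o : fact -> Prop) :=
  [/\ subset o (fun A => A \in db),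
      forall A, o A ->
        (exists F, atom_is q A F /\ F \in q0) /\
        (forall B, B \in db -> key_equal A B -> o B) &
      exists r, repair o r /\
        forall theta, sat_in theta q (fun A => (A \in db /\ ~ o A) \/ r A) ->
          forall F, F \in q0 -> ~ r (inst theta F)].

Definition max_garbage q db q0 (o : fact -> Prop) :=
  garbage q db q0 o /\ forall o', garbage q db q0 o' -> subset o' o.

End CQA.

(* Garbage propagates backwards along the edges of the hook_C graph, and in a
   strong component every fact reaches every other one.  Let A hook_C B with
   B in the maximal garbage set M.  If A were not in M, then M together with
   the block of A would still be a garbage set, witnessed by a repair of M
   extended with A.  Indeed, a valuation theta into db sending an atom F of C
   to A agrees on vars(F) with the valuation witnessing A hook B; since any
   two valuations into db jointly satisfy K(q^c) (c-mode blocks are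
   singletons), they also agree on key(G), where G is the atom of B.  So
   theta sends G into the block of B, inside M, hence into the repair of M,
   which the garbage property of M forbids.  Maximality of M then puts A
   in M. *)
From Stdlib Require Import Classical_Prop.
From mathcomp Require Import all_boot.
Set Implicit Arguments. Unset Strict Implicit. Unset Printing Implicit Defensive.

Lemma uniq_map_inj_in (T1 T2 : eqType) (f : T1 -> T2) (s : seq T1) :
  uniq (map f s) -> {in s &, injective f}.
Proof.
elim: s => [|a s IH] //= /andP [fa_s uniq_fs] x y.
rewrite !inE => /orP [/eqP ->|xs] /orP [/eqP ->|ys] fxy //.
- by move: fa_s; rewrite fxy map_f.
- by move: fa_s; rewrite -fxy map_f.
- exact: IH.
Qed.

Section Valuations.
Variables (Rel V D : eqType) (sch : schema Rel).
Implicit Types (th eta : V -> D) (A B E : fact Rel D) (H : atom Rel V D).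

Definition term_val th (t : term V D) : D :=
  match t with inl x => th x | inr c => c end.

Lemma map_term_val_eq th eta (s : seq (term V D)) :
  map (term_val th) s = map (term_val eta) s <-> {in vars_of s, th =1 eta}.
Proof.
elim: s => [|[x|c] s IH] //=; split.
- case=> val_x /IH agree_s y; rewrite inE => /orP [/eqP -> //|]; exact: agree_s.
- move=> agree_xs; rewrite agree_xs ?mem_head //; congr (_ :: _).
  by apply/IH => y ys; apply: agree_xs; rewrite inE ys orbT.
- by case=> /IH.
- by move=> /IH ->.
Qed.

Lemma inst_agree th eta H :
  inst th H = inst eta H -> {in vars H, th =1 eta}.
Proof. by case=> /map_term_val_eq. Qed.

Lemma inst_key_equal th eta H :
  {in key sch H, th =1 eta} -> key_equal sch (inst th H) (inst eta H).
Proof.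
by move=> agree_key; rewrite /key_equal /= eqxx -!map_take; apply/eqP/map_term_val_eq.
Qed.

Lemma key_equal_refl A : key_equal sch A A.
Proof. by rewrite /key_equal !eqxx. Qed.

Lemma key_equal_sym A B : key_equal sch A B -> key_equal sch B A.
Proof. by rewrite /key_equal => /andP [/eqP -> /eqP ->]; rewrite !eqxx. Qed.

Lemma key_equal_trans A B E :
  key_equal sch A B -> key_equal sch B E -> key_equal sch A E.
Proof. by rewrite /key_equal => /andP [/eqP -> /eqP ->]. Qed.

Lemma key_equal_fst A B : key_equal sch A B -> A.1 = B.1.
Proof. by case/andP => /eqP. Qed.

End Valuations.

Lemma fd_implies_agree (V T : eqType) (Sigma : seq (fd V)) (X Y : seq V)
    (f g : V -> T) :
  (forall d, d \in Sigma -> {in d.1, f =1 g} -> {in d.2, f =1 g}) ->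
  fd_implies Sigma X Y -> {in X, f =1 g} -> {in Y, f =1 g}.
Proof.
move=> sat_Sigma implies_XY agree_X.
(* Armstrong's two-tuple relation: one tuple is constant, the other flags
   where f and g differ. *)
pose t0 := fun _ : V => 0; pose t1 := fun x => nat_of_bool (f x != g x).
have agreeE Z : agree t0 t1 Z <-> {in Z, f =1 g}.
  split=> agree_Z x /agree_Z; rewrite /t0 /t1; first by case: eqP.
  by move=> ->; rewrite eqxx.
have agree_sym (a b : V -> nat) Z : agree a b Z -> agree b a Z by move=> ab x /ab.
have sat_pair Z W : ({in Z, f =1 g} -> {in W, f =1 g}) -> fd_sat [:: t0; t1] (Z, W).
  move=> ZW u v /= u_t v_t.
  case: u_t => [<-|[<-|[]]]; case: v_t => [<-|[<-|[]]] //=.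
  - by move=> /agreeE /ZW /agreeE.
  - by move=> /agree_sym /agreeE /ZW /agreeE /agree_sym.
apply/agreeE; apply: (implies_XY [:: t0; t1]) => /=; [|by left|by right; left|exact/agreeE].
by move=> [Z W] /sat_Sigma; apply: sat_pair.
Qed.

Section Query.
Variables (Rel V D : eqType) (sch : schema Rel).
Variables (q : seq (atom Rel V D)) (db : seq (fact Rel D)).
Hypotheses (sjf_q : sjf_query sch q) (db_q : is_db sch q db).
Implicit Types (A B : fact Rel D) (F G H : atom Rel V D) (th eta : V -> D).

Definition embeds th := sat_in th q (fun X => X \in db).

Lemma atom_is_uniq A F G : atom_is q A F -> atom_is q A G -> F = G.
Proof.
case: sjf_q => uniq_q _ [Fq FA] [Gq GA].
by apply: (uniq_map_inj_in uniq_q) => //; rewrite /= FA GA.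
Qed.

Lemma embeds_agree_vars th eta H :
  embeds th -> embeds eta -> H \in qc sch q ->
  {in key sch H, th =1 eta} -> {in vars H, th =1 eta}.
Proof.
move=> emb_th emb_eta; rewrite mem_filter => /andP [cH Hq] /inst_key_equal keq.
apply: inst_agree; case: db_q => _ c_unique.
exact: c_unique (emb_th H Hq) (emb_eta H Hq) cH keq.
Qed.

Lemma medge_agree th eta F G :
  embeds th -> embeds eta -> medge sch q F G ->
  {in vars F, th =1 eta} -> {in key sch G, th =1 eta}.
Proof.
move=> emb_th emb_eta [_ _ _ implies_FG]; apply: fd_implies_agree implies_FG.
by move=> _ /mapP [H H_qc ->]; apply: embeds_agree_vars.
Qed.

Lemma hook_inst_key_equal A B th F :
  hook sch q db A B -> embeds th -> F \in q -> inst th F = A ->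
  exists2 G, atom_is q B G & key_equal sch B (inst th G).
Proof.
move=> [_ [_ [eta [F0 [G0 [emb_eta [medge_FG [A_F0 B_G0]]]]]]]] emb_th Fq th_F.
subst A; have [F0q G0q _ _] := medge_FG.
have F_F0 : F = F0.
  by apply: (@atom_is_uniq (inst th F)); split=> //; rewrite th_F.
subst F0; have key_G0 := medge_agree emb_th emb_eta medge_FG (inst_agree th_F).
exists G0; first by split=> //; rewrite (key_equal_fst B_G0).
exact: key_equal_trans B_G0 (key_equal_sym (inst_key_equal key_G0)).
Qed.

End Query.

Section Garbage.
Variables (Rel V D : eqType) (sch : schema Rel).
Variables (q q0 : seq (atom Rel V D)) (db : seq (fact Rel D)).
Hypothesis q0_sub : {subset q0 <= q}.
Implicit Types (M o r : fact Rel D -> Prop) (A : fact Rel D).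

Definition block A x := x \in db /\ key_equal sch A x.

Lemma garbage_block_closed M A B :
  garbage sch q db q0 M -> M A -> B \in db -> key_equal sch A B -> M B.
Proof. by case=> _ closed_M _ /closed_M [_]; apply. Qed.

Lemma repair_add_block o r (B : fact Rel D -> Prop) A :
  repair sch o r -> B A -> (forall x, B x -> key_equal sch A x) ->
  (forall x, o x -> ~ key_equal sch x A) ->
  repair sch (fun x => o x \/ B x) (fun x => r x \/ x = A).
Proof.
move=> [r_o r_cons r_max] BA B_keyA o_keyA; split.
- by move=> x [/r_o|->]; [left|right].
- move=> x y [rx|->] [ry|->] xy //.
  + exact: r_cons.
  + by case: (o_keyA x (r_o x rx)).
  + by case: (o_keyA y (r_o y ry)); apply: key_equal_sym.
- move=> r' r_r' r'_oB r'_cons x r'x.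
  case: (r'_oB x r'x) => [ox|Bx]; [left|right].
  + apply: (r_max (fun y => r' y /\ o y)) => //.
    * by move=> y ry; split; [apply: r_r'; left|apply: r_o].
    * by move=> y [].
    * by move=> y z [r'y _] [r'z _]; apply: r'_cons.
  + by symmetry; apply: r'_cons (B_keyA x Bx) => //; apply: r_r'; right.
Qed.

Lemma garbage_add_block M A :
  garbage sch q db q0 M -> ~ M A -> A \in db ->
  (exists F, atom_is q A F /\ F \in q0) ->
  (forall th F, embeds q db th -> F \in q0 -> inst th F = A ->
     exists2 G, G \in q0 & M (inst th G)) ->
  garbage sch q db q0 (fun x => M x \/ block A x).
Proof.
move=> garbage_M notMA Adb atomA forced.
have [M_db closed_M [r [repair_r r_safe]]] := garbage_M.
have [r_M _ _] := repair_r.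
split.
- by move=> x [/M_db|[]].
- move=> x [Mx|[xdb Ax]].
  + by have [atom_x block_x] := closed_M x Mx; split=> // y ydb xy; left; apply: block_x.
  + split; last by move=> y ydb xy; right; split=> //; apply: key_equal_trans Ax xy.
    case: atomA => F [[Fq FA] Fq0]; exists F; do !split=> //.
    by rewrite FA (key_equal_fst Ax).
- exists (fun x => r x \/ x = A); split.
    apply: repair_add_block => //; first by split=> //; apply: key_equal_refl.
    + by move=> x [].
    + by move=> x Mx xA; apply: notMA; apply: garbage_block_closed garbage_M Mx Adb xA.
  move=> th sat_th.
  have sat_r : sat_in th q (fun X => (X \in db /\ ~ M X) \/ r X).
    move=> F /sat_th [[Xdb notX]|[rX|->]]; [left|right|left] => //.
    by split=> // MX; apply: notX; left.
  move=> F Fq0 [rF|thF]; first exact: r_safe sat_r F Fq0 rF.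
  have emb_th : embeds q db th by move=> X /sat_r [[]|/r_M/M_db].
  have [G Gq0 MG] := forced th F emb_th Fq0 thF.
  (* G is sent into M, so only the repair of M can contain its image. *)
  case: (sat_r G (q0_sub Gq0)) => [[_ /(_ MG)] //|rG].
  exact: r_safe sat_r G Gq0 rG.
Qed.

Lemma max_garbage_forced M A :
  max_garbage sch q db q0 M -> A \in db ->
  (exists F, atom_is q A F /\ F \in q0) ->
  (forall th F, embeds q db th -> F \in q0 -> inst th F = A ->
     exists2 G, G \in q0 & M (inst th G)) ->
  M A.
Proof.
move=> [garbage_M max_M] Adb atomA forced; apply: NNPP => notMA.
apply: notMA (max_M _ (garbage_add_block garbage_M notMA Adb atomA forced) A _).
by right; split=> //; apply: key_equal_refl.
Qed.

End Garbage.

Section Cycle.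
Variables (Rel V D : eqType) (sch : schema Rel).
Variables (q C : seq (atom Rel V D)) (db : seq (fact Rel D)) (M : fact Rel D -> Prop).
Hypotheses (sjf_q : sjf_query sch q) (cycle_C : elem_cycle sch q C).
Hypotheses (db_q : is_db sch q db) (max_M : max_garbage sch q db C M).

Lemma elem_cycle_sub : {subset C <= q}.
Proof. by case: cycle_C => _ _ medge_C F /medge_C []. Qed.

Lemma cedge_max_garbage A B : cedge sch q C db A B -> M B -> M A.
Proof.
move=> [[Adb atomA] [[_ [GB [atomB GBC]]] [hookAB _]]] MB.
apply: (max_garbage_forced elem_cycle_sub max_M Adb atomA) => th F emb_th FC thF.
have [G atomBG BG] := hook_inst_key_equal sjf_q db_q hookAB emb_th (elem_cycle_sub FC) thF.
exists G; first by rewrite (atom_is_uniq sjf_q atomBG atomB).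
exact: garbage_block_closed (proj1 max_M) MB (emb_th G atomBG.1) BG.
Qed.

Lemma creach_max_garbage A B : creach sch q C db A B -> M B -> M A.
Proof.
by elim=> [x y /cedge_max_garbage | x | x y z _ IHxy _ IHyz] // /IHyz /IHxy.
Qed.

End Cycle.

Theorem corollary20 (Rel V D : eqType) (sch : schema Rel)
  (q C : seq (atom Rel V D)) (db : seq (fact Rel D))
  (S M : fact Rel D -> Prop) :
  wf_schema sch -> sjf_query sch q -> elem_cycle sch q C -> is_db sch q db ->
  strong_component sch q C db S -> max_garbage sch q db C M ->
  (exists A, S A /\ M A) -> forall A, S A -> M A.
Proof.
move=> _ sjf_q cycle_C db_q [_ _ reach_S _] max_M [A0 [SA0 MA0]] A SA.
exact: (creach_max_garbage sjf_q cycle_C db_q max_M (reach_S A A0 SA SA0) MA0).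
Qed.
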